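(* Let $f:[0,1]\to[0,1]$ be a surjective continuous function. If $f$ admits a splitting sequence, then there exist a nondegenerate continuum $C\subseteq\varprojlim f$ and a sequence $(C_n)_{n\in\mathbb N}$ of nondegenerate continua $C_n\subseteq\varprojlim f$ with $C_n\neq C$ for all $n$, such that $C_n\to C$ in the Hausdorff metric.
   Context: $\varprojlim f=\{\mathbf x=(x_0,x_1,\dots)\in[0,1]^{\mathbb N}: f(x_{n+1})=x_n\ \forall n\}$ with the topology inherited from the product topology (a compact metric space; the Hausdorff metric is taken with respect to a compatible metric). A sequence $(T_n)_{n\in\mathbb N}$ of closed intervals $T_n\subsetneq[0,1]$ (possibly degenerate) is tight if $f(T_{n+1})=T_n$ for every $n$ and $T_n$ is nondegenerate for all sufficiently large $n$. A tight sequence $(T_n)$, $T_n=[l_n,r_n]$, is a splitting sequence admitted by $f$ if there are an infinite set $N\subseteq\mathbb N$ and nondegenerate closed intervals $S_n\subseteq[0,1]$ ($n\in N$) with $S_n\cap T_n\subseteq\{l_n,r_n\}$ and $f(S_n)=f(T_n)$ for all $n\in N$. *)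

From mathcomp Require Import all_boot all_order all_algebra.
From mathcomp Require Import all_classical all_reals all_analysis.
Set Implicit Arguments. Unset Strict Implicit. Unset Printing Implicit Defensive.
Import Order.TTheory GRing.Theory Num.Theory.
Import numFieldNormedType.Exports.
Local Open Scope classical_set_scope.
Local Open Scope ring_scope.

(* The ambient space [0,1]^N (we use R^N with the product topology; the
   inverse limit lies inside [0,1]^N). *)
Definition seqR (R : realType) := {ptws nat -> R}.

Definition invlim (R : realType) (f : R -> R) : set (seqR R) :=
  [set x | (forall n, x n \in `[0, 1]) /\ (forall n, f (x n.+1) = x n)].

Definition nondeg_continuum (R : realType) (C : set (seqR R)) : Prop :=
  compact C /\ connected C /\ exists x y, C x /\ C y /\ x <> y.

(* A compatible metric on [0,1]^N (product topology):
   d(x,y) = sum_k 2^-(k+1) |x_k - y_k|. *)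
Definition dprod (R : realType) (x y : seqR R) : R :=
  limn (fun n => \sum_(0 <= k < n) ((2 : R)^-1 ^+ k.+1 * `|x k - y k|)).

Definition dist_to (R : realType) (x : seqR R) (B : set (seqR R)) : R :=
  inf [set dprod x b | b in B].

Definition hdist (R : realType) (A B : set (seqR R)) : R :=
  Num.max (sup [set dist_to a B | a in A]) (sup [set dist_to b A | b in B]).

Definition cint (R : realType) (p : R * R) : set R := `[p.1, p.2].

Definition tight (R : realType) (f : R -> R) (T : nat -> R * R) : Prop :=
  (forall n, 0 <= (T n).1 /\ (T n).1 <= (T n).2 /\ (T n).2 <= 1 /\
             cint (T n) <> `[0, 1]%classic) /\
  (forall n, f @` cint (T n.+1) = cint (T n)) /\
  (exists m, forall n, (m <= n)%N -> (T n).1 < (T n).2).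

Definition splitting_sequence (R : realType) (f : R -> R) (T : nat -> R * R) : Prop :=
  tight f T /\
  exists (N : set nat) (S : nat -> R * R),
    infinite_set N /\
    forall n, N n ->
      0 <= (S n).1 /\ (S n).1 < (S n).2 /\ (S n).2 <= 1 /\
      cint (S n) `&` cint (T n) `<=` [set (T n).1; (T n).2] /\
      f @` cint (S n) = f @` cint (T n).

Definition admits_splitting_sequence (R : realType) (f : R -> R) : Prop :=
  exists T, splitting_sequence f T.

From mathcomp Require Import all_boot all_order all_algebra.
From mathcomp Require Import all_classical all_reals all_analysis.
From mathcomp Require Import ring lra.
Set Implicit Arguments. Unset Strict Implicit. Unset Printing Implicit Defensive.
Import Order.TTheory GRing.Theory Num.Theory.
Import numFieldNormedType.Exports.
Local Open Scope classical_set_scope.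
Local Open Scope ring_scope.

(* The threads x with x_n in T_n for all n form a subcontinuum C of the
   inverse limit: it is compact by Tychonoff's theorem and connected because
   each coordinate projection maps it onto the interval T_n while each
   coordinate determines all the earlier ones.  Every subinterval of [0,1] is
   the f-image of a subinterval (intermediate value theorem), so for n in the
   splitting set we may keep T_0, ..., T_(n-1), replace T_n by S_n, and lift
   upwards.  The resulting continuum C_n has n-th projection S_n, which is not
   T_n, so C_n <> C; but C_n and C have the same projections below n, so their
   Hausdorff distance is at most 2^-n. *)

Section ProductDistance.
Variable R : realType.
Implicit Types (x y : seqR R) (A B : set (seqR R)).

Lemma dprod_le_agree x y n :
  (forall k, `|x k - y k| <= 1) -> (forall k, (k < n)%N -> x k = y k) ->
  0 <= dprod x y <= 2^-1 ^+ n.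
Proof.
move=> xy1 xy_eq.
set s := fun N => \sum_(0 <= k < N) ((2 : R)^-1 ^+ k.+1 * `|x k - y k|).
have term_ge0 k : 0 <= (2 : R)^-1 ^+ k.+1 * `|x k - y k|.
  by rewrite mulr_ge0 ?exprn_ge0.
have sS N : s N.+1 = s N + (2 : R)^-1 ^+ N.+1 * `|x N - y N|.
  by rewrite /s big_nat_recr.
(* the geometric tail [2^-(maxn N n)] still fits below [2^-n] *)
have s_le N : s N + 2^-1 ^+ maxn N n <= 2^-1 ^+ n.
  elim: N => [|N IH]; first by rewrite /s big_geq // add0r max0n.
  rewrite sS; case: (ltnP N n) => Nn.
    rewrite xy_eq // subrr normr0 mulr0 addr0 (maxn_idPr Nn).
    by rewrite (maxn_idPr (ltnW Nn)) in IH.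
  rewrite (maxn_idPl Nn) in IH; rewrite (maxn_idPl (leqW Nn)).
  apply: le_trans IH; rewrite -addrA lerD2l exprS.
  have : (0 : R) <= 2^-1 ^+ N by rewrite exprn_ge0.
  by have := xy1 N; have := normr_ge0 (x N - y N); nra.
have s_ub N : s N <= 2^-1 ^+ n by apply: le_trans (s_le N); rewrite lerDl exprn_ge0.
have s_cvg : cvgn s.
  apply: nondecreasing_is_cvgn.
  - by apply/nondecreasing_seqP => N; rewrite sS lerDl.
  - by exists (2^-1 ^+ n) => _ [N _ <-].
apply/andP; split.
  by apply: limr_ge => //; apply: nearW => N; apply: sumr_ge0.
by apply: limr_le => //; apply: nearW.
Qed.

Lemma sup_dist_to_le A B e :
  A !=set0 -> B !=set0 -> (forall a b, A a -> B b -> 0 <= dprod a b) ->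
  (forall a, A a -> exists2 b, B b & dprod a b <= e) ->
  0 <= sup [set dist_to a B | a in A] <= e.
Proof.
move=> [a0 Aa0] [b0 Bb0] dprod_ge0 close.
have dist_ge0 a : A a -> 0 <= dist_to a B.
  move=> Aa; apply: lb_le_inf; first by exists (dprod a b0), b0.
  by move=> _ [b Bb <-]; exact: dprod_ge0.
have dist_le a : A a -> dist_to a B <= e.
  move=> Aa; have [b Bb ab] := close a Aa; apply: le_trans ab.
  apply: ge_inf; last by exists b.
  by exists 0 => _ [b' Bb' <-]; exact: dprod_ge0.
apply/andP; split.
  apply: le_trans (dist_ge0 a0 Aa0) _; apply: ub_le_sup; last by exists a0.
  by exists e => _ [a Aa <-]; exact: dist_le.
apply: ge_sup; first by exists (dist_to a0 B), a0.
by move=> _ [a Aa <-]; exact: dist_le.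
Qed.

Lemma hdist_le A B e :
  A !=set0 -> B !=set0 ->
  (forall a b, A a -> B b -> 0 <= dprod a b /\ 0 <= dprod b a) ->
  (forall a, A a -> exists2 b, B b & dprod a b <= e) ->
  (forall b, B b -> exists2 a, A a & dprod b a <= e) ->
  0 <= hdist A B <= e.
Proof.
move=> A0 B0 dprod_ge0 closeA closeB.
have /andP[ge0A leA] :=
  sup_dist_to_le A0 B0 (fun a b Aa Bb => (dprod_ge0 a b Aa Bb).1) closeA.
have /andP[ge0B leB] :=
  sup_dist_to_le B0 A0 (fun b a Bb Aa => (dprod_ge0 a b Aa Bb).2) closeB.
by rewrite /hdist le_max ge0A ge_max leA leB.
Qed.

End ProductDistance.

Section ConnectedSequences.
Variable T : uniformType.
Hypothesis T_hausdorff : hausdorff_space T.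

(* Given a separation [E] of [L], connectedness of the projections yields
   [a k] in [E false] sharing its [k]-th coordinate with a point of [E true];
   a cluster point [p] of [a] lies in [E false], and since coordinates
   determine earlier ones, [p] is also a limit of points of [E true]. *)
Lemma connected_of_connected_proj (L : set {ptws nat -> T}) :
  compact L ->
  (forall x y k, L x -> L y -> x k = y k -> forall j, (j <= k)%N -> x j = y j) ->
  (forall k, connected ((fun x => x k) @` L)) ->
  connected L.
Proof.
move=> Lcp Ldet Lconn; apply/connectedP => E [E0 LE sep]; have [sep1 sep2] := sep.
have EL b : E b `<=` L by rewrite LE; case: b => x Ex; [right|left].
have Ecp b : compact (E b).
  have -> : E b = L `&` closure (E b).
    rewrite LE setIUl; case: b.
    - by rewrite sep2 set0U; apply/esym/setIidPl/subset_closure.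
    - by rewrite [E true `&` _]setIC sep1 setU0; apply/esym/setIidPl/subset_closure.
  exact: compact_closedI Lcp (@closed_closure _ _).
have Ecl b : closed (E b).
  exact: compact_closed (hausdorff_product (fun=> T_hausdorff)) (Ecp b).
pose P b k := (fun x : {ptws nat -> T} => x k) @` E b.
have Pcl b k : closed (P b k).
  apply: compact_closed T_hausdorff _; apply: continuous_compact (Ecp b).
  exact/continuous_subspaceT/proj_continuous.
have meet k : exists a, E false a /\ exists2 b, E true b & a k = b k.
  apply: contrapT => nmeet; apply: (connectedP _).1 (Lconn k) (P^~ k) _.
  have disj : P false k `&` P true k = set0.
    apply/seteqP; split => // _ [[a Ea <-] [b Eb abk]]; apply: nmeet.
    by exists a; split => //; exists b.
  split.
  - by move=> b; have [x Ex] := E0 b; exists (x k), x.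
  - by rewrite LE image_setU.
  - by rewrite /separated -!(closure_id _).1 ?Pcl ?disj.
have [a ha] := choice meet.
have [p [Ep]] : E false `&` cluster (a @ \oo) !=set0.
  by apply: Ecp; exists 0%N => // n _; exact: (ha n).1.
rewrite clusterE => p_clu.
have pk k : P true k (p k).
  set S := [set x : {ptws nat -> T} | P true k (x k)].
  have Scl : closed S.
    by apply: preimage_closed => [x _|]; [exact: proj_continuous|exact: Pcl].
  have aS : (a @ \oo) S.
    exists k => // n /= kn; have [Ean [b Eb abn]] := ha n.
    by exists b => //; apply: Ldet (EL _ _ Eb) (EL _ _ Ean) (esym abn) k kn.
  by move: (p_clu S aS); rewrite -(closure_id _).1.
have /choice[b hb] : forall k, exists x, E true x /\ x k = p k.
  by move=> k; have [x Ex xk] := pk k; exists x.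
have b_cvg : b @ \oo --> p.
  apply/pointwise_cvgP => t W /nbhs_singleton Wp; exists t => // k /= tk.
  by rewrite (Ldet _ _ _ (EL _ _ (hb k).1) (EL _ _ Ep) (hb k).2 t tk).
have Ep' : E true p.
  apply: (@closed_cvg _ _ _ _ b (E true) (Ecl true) _ p b_cvg).
  by apply: nearW => k; exact: (hb k).1.
by have /seteqP[/(_ p (conj Ep Ep'))] := separated_disjoint sep.
Qed.
End ConnectedSequences.

Section IntervalLift.
Variable R : realType.
Implicit Types (h : R -> R) (p q v : R).

Lemma continuous_ivt h (u w y : R) : continuous h -> u <= w ->
  Num.min (h u) (h w) <= y <= Num.max (h u) (h w) -> exists2 t, u <= t <= w & h t = y.
Proof.
move=> h_cont uw y_between; have [t] := IVT uw (continuous_subspaceT h_cont) y_between.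
by rewrite in_itv /=; exists t.
Qed.

Lemma last_hit h p q v : continuous h -> p <= q -> h p = v ->
  exists c, [/\ p <= c, c <= q, h c = v & forall t, c < t <= q -> h t != v].
Proof.
move=> h_cont pq hpv; set Z := [set t | (p <= t <= q) /\ h t = v].
have Zcl : closed Z.
  have -> : Z = `[p, q]%classic `&` h @^-1` [set v].
    by apply/seteqP; split => t /=; rewrite in_itv.
  apply: closedI; first exact: itv_closed.
  by apply: preimage_closed; [move=> t _; exact: h_cont|exact: closed_eq].
have Zp : Z p by rewrite /Z /= lexx pq.
have Zub : has_ubound Z by exists q => t [/andP[]].
have [/andP[pc cq] hcv] : Z (sup Z) by apply: Zcl; apply: closure_sup => //; exists p.
exists (sup Z); split => // t /andP[ct tq]; apply/eqP => htv.
have : t <= sup Z by apply: ub_le_sup => //; split => //; rewrite tq (le_trans pc (ltW ct)).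
by rewrite leNgt ct.
Qed.

(* [c] is the last hit of [h p] in [[p, q]] and [d] the first hit of [h q]
   after [c]; in between, [h] cannot leave [h @`[p, q]] without one more hit. *)
Lemma interval_lift h p q : continuous h -> p <= q ->
  exists c d, [/\ p <= c, c <= d, d <= q & h @` `[c, d] = (h @`[p, q])%classic].
Proof.
move=> h_cont pq; have [c [pc cq hc c_last]] := last_hit h_cont pq erefl.
have hN_cont : continuous (h \o -%R).
  by move=> t; apply: continuous_comp; [exact: oppr_continuous|exact: h_cont].
have [s [qs sc hs s_last]] : exists s, [/\ - q <= s, s <= - c, h (- s) = h q &
    forall t, s < t <= - c -> h (- t) != h q].
  by apply: (last_hit hN_cont); rewrite ?lerN2 //= opprK.
have d_first t : c <= t < - s -> h t != h q.
  by move=> /andP[ct ts]; rewrite -[t]opprK; apply: s_last; rewrite ltrNr lerN2 ct ts.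
have cd : c <= - s by rewrite lerNr.
exists c, (- s); split => //; first by rewrite lerNl.
apply/seteqP; split => [y [t]|y]; rewrite /= !in_itv /=; last first.
  move=> hy; have [t ct hty] : exists2 t, c <= t <= - s & h t = y.
    by apply: continuous_ivt; rewrite ?hc ?hs.
  by exists t; rewrite //= in_itv.
move=> /andP[ct td] <-{y}.
have [->|tc] := eqVneq t c; first by rewrite hc ge_min le_max lexx.
have [->|ts] := eqVneq t (- s); first by rewrite hs ge_min le_max lexx !orbT.
have {tc}ct : c < t by rewrite lt_neqAle eq_sym tc ct.
have {ts}td : t < - s by rewrite lt_neqAle ts td.
have hp_out : ~~ (Num.min (h t) (h q) <= h p <= Num.max (h t) (h q)).
  apply/negP; rewrite -hs => /(continuous_ivt h_cont (ltW td))[r /andP[tr rs] /eqP].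
  by apply/negP/c_last; lra.
have hq_out : ~~ (Num.min (h p) (h t) <= h q <= Num.max (h p) (h t)).
  apply/negP; rewrite -hc => /(continuous_ivt h_cont (ltW ct))[r /andP[cr rt] /eqP].
  by apply/negP/d_first; lra.
by move: hp_out hq_out; rewrite !ge_min !le_max; lra.
Qed.
End IntervalLift.

Section ChainLimit.
Variable R : realType.

(* [f] is only continuous on [[0, 1]]; precomposing with this retraction gives
   a globally continuous function that agrees with [f] on [[0, 1]]. *)
Definition clamp01 (t : R) : R := Num.max 0 (Num.min t 1).

Lemma clamp01_id t : 0 <= t <= 1 -> clamp01 t = t.
Proof. by move=> /andP[t0 t1]; rewrite /clamp01 (min_idPl t1) (max_idPr t0). Qed.

Lemma clamp01_in t : `[0, 1]%classic (clamp01 t).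
Proof. by rewrite /= in_itv /= /clamp01 le_max lexx ge_max ler01 ge_min lexx orbT. Qed.

Lemma continuous_clamp01 : continuous clamp01.
Proof.
move=> t; apply: (@continuous_max R R (fun=> 0) (Num.min^~ 1) t (cvg_cst _)).
exact: (@continuous_min R R id (fun=> 1) t cvg_id (cvg_cst _)).
Qed.

Definition subinterval01 (p : R * R) := [/\ 0 <= p.1, p.1 <= p.2 & p.2 <= 1].

Lemma cint_sub01 p t : subinterval01 p -> cint p t -> 0 <= t <= 1.
Proof.
move=> [p0 _ p1]; rewrite /cint /= in_itv /= => /andP[pt tp].
by rewrite (le_trans p0 pt) (le_trans tp p1).
Qed.

Variable f : R -> R.
Hypothesis f_cont : {within `[0, 1]%classic, continuous f}.
Hypothesis f_surj : f @` `[0, 1]%classic = `[0, 1]%classic.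

Lemma continuous_f_clamp01 : continuous (f \o clamp01).
Proof.
move=> t W /((subspace_continuousP _ f).1 f_cont _ (clamp01_in t)).
rewrite /within /= => /continuous_clamp01 fW.
have fW' : nbhs t (clamp01 @^-1` [set s | s \in `[0, 1] -> (f @^-1` W) s]) := fW.
suff : nbhs t ((f \o clamp01) @^-1` W) by [].
by apply: filterS fW' => s /= fWs; apply: fWs; rewrite inE; exact: clamp01_in.
Qed.

Lemma lift_interval p :
  subinterval01 p -> exists2 q, subinterval01 q & f @` cint q = cint p.
Proof.
move=> [p0 p12 p1].
have lift u v : `[0, 1]%classic u -> `[0, 1]%classic v -> u <= v ->
    exists2 q, subinterval01 q & f @` cint q = (f @`[u, v])%classic.
  move=> + + uv; rewrite /= !in_itv /= => u01 v01.
  have [/andP[u0 _] /andP[_ v1]] := (u01, v01).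
  have [c [d [uc cd dv img]]] := interval_lift continuous_f_clamp01 uv.
  have cd01 : subinterval01 (c, d) by split; [exact: le_trans u0 uc| |exact: le_trans dv v1].
  exists (c, d) => //.
  rewrite -(eq_imagel (fun t ct => congr1 f (clamp01_id (cint_sub01 cd01 ct)))) img /=.
  by rewrite !clamp01_id.
have : `[0, 1]%classic p.1 by rewrite /= in_itv /= p0 (le_trans p12 p1).
have : `[0, 1]%classic p.2 by rewrite /= in_itv /= p1 (le_trans p0 p12).
rewrite -f_surj => -[v v01 fv] [u u01 fu].
have [uv|vu] := leP u v.
- have [q q01 fq] := lift u v u01 v01 uv; exists q => //.
  by rewrite fq fu fv (min_idPl p12) (max_idPr p12).
- have [q q01 fq] := lift v u v01 u01 (ltW vu); exists q => //.
  by rewrite fq fu fv (min_idPr p12) (max_idPl p12).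
Qed.

Definition interval_chain (I : nat -> R * R) :=
  forall k, subinterval01 (I k) /\ f @` cint (I k.+1) = cint (I k).

Definition chain_limit (I : nat -> R * R) : set (seqR R) :=
  [set x | (forall k, cint (I k) (x k)) /\ (forall k, f (x k.+1) = x k)].

Lemma thread_agree_le (x y : seqR R) n :
  (forall k, f (x k.+1) = x k) -> (forall k, f (y k.+1) = y k) ->
  x n = y n -> forall k, (k <= n)%N -> x k = y k.
Proof.
move=> fx fy; elim: n => [|n IH] xy k; first by rewrite leqn0 => /eqP ->.
by rewrite leq_eqVlt => /predU1P[-> //|]; apply: IH; rewrite -fx -fy xy.
Qed.

Lemma chain_limit_proj I k : interval_chain I ->
  (fun x => x k) @` chain_limit I = cint (I k).
Proof.
move=> hI; apply/seteqP; split => [_ [x Ix <-]|y Iky]; first exact: Ix.1 k.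
have /choice[up hup] : forall jz : nat * R,
    exists w, cint (I jz.1) jz.2 -> cint (I jz.1.+1) w /\ f w = jz.2.
  move=> [j z]; have [zI|nzI] := pselect (cint (I j) z); last by exists 0 => /nzI.
  by move: zI; rewrite -(hI j).2 => -[w Iw fw]; exists w.
pose u j := iteri j (fun i z => up (k + i, z)%N) y.
have u_in j : cint (I (k + j)%N) (u j).
  elim: j => [|j IH]; first by rewrite addn0.
  by rewrite addnS; exact: (hup (k + j, u j)%N IH).1.
have u_up j : f (u j.+1) = u j by exact: (hup (k + j, u j)%N (u_in j)).2.
have down j : (j <= k)%N -> cint (I (k - j)%N) (iter j f y).
  elim: j => [|j IH] jk; first by rewrite subn0.
  rewrite iterS -(hI (k - j.+1)%N).2; exists (iter j f y) => //.
  by rewrite -subSn // subSS; exact: IH (ltnW jk).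
(* [f^(k-i) y] below [k], [u (i-k)] above: truncated subtraction merges both *)
exists (fun i => iter (k - i) f (u (i - k)%N)); last by rewrite subnn.
split => i.
- have [ik|ki] := leqP i k.
  + have -> : (i - k = 0)%N by apply/eqP; rewrite subn_eq0.
    by have := down (k - i)%N (leq_subr _ _); rewrite subKn.
  + have -> : (k - i = 0)%N by apply/eqP; rewrite subn_eq0 ltnW.
    by have := u_in (i - k)%N; rewrite subnKC // ltnW.
- have [ik|ki] := ltnP i k.
  + have -> : (i.+1 - k = 0)%N by apply/eqP; rewrite subn_eq0.
    have -> : (i - k = 0)%N by apply/eqP; rewrite subn_eq0 ltnW.
    by rewrite -(subnSK ik).
  + have -> : (k - i.+1 = 0)%N by apply/eqP; rewrite subn_eq0 leqW.
    have -> : (k - i = 0)%N by apply/eqP; rewrite subn_eq0.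
    by rewrite subSn //; exact: u_up.
Qed.

Lemma chain_limit_sub_invlim I : interval_chain I -> chain_limit I `<=` invlim f.
Proof.
move=> hI x [xI fx]; split => // k.
by rewrite in_itv /=; exact: cint_sub01 (hI k).1 (xI k).
Qed.

Lemma closed_thread_step k : closed [set x : seqR R | (f \o clamp01) (x k.+1) = x k].
Proof.
have -> : [set x : seqR R | (f \o clamp01) (x k.+1) = x k] =
    (fun x : seqR R => (f \o clamp01) (x k.+1) - x k) @^-1` [set 0].
  apply/seteqP; split => x /=; first by move=> ->; rewrite subrr.
  by move/eqP; rewrite subr_eq0 => /eqP.
apply: preimage_closed; last exact: closed_eq.
move=> x _.
have h1 : (fun y : seqR R => (f \o clamp01) (y k.+1)) @ x --> (f \o clamp01) (x k.+1).
  apply: (@continuous_comp _ _ _ (fun y : seqR R => y k.+1)); first exact: proj_continuous.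
  exact: continuous_f_clamp01.
have h2 : (fun y : seqR R => y k) @ x --> x k by exact: proj_continuous.
have := cvgB h1 h2; exact.
Qed.

Lemma chain_limit_compact I : interval_chain I -> compact (chain_limit I).
Proof.
move=> hI.
have -> : chain_limit I = [set x : seqR R | forall k, cint (I k) (x k)] `&`
    \bigcap_k [set x : seqR R | (f \o clamp01) (x k.+1) = x k].
  have x01 x k : (forall k, cint (I k) (x k)) -> 0 <= x k <= 1.
    by move=> xI; exact: cint_sub01 (hI k).1 (xI k).
  apply/seteqP; split => x [xI fx]; split => // k.
  - by move=> _; rewrite /= clamp01_id ?fx ?x01.
  - by move: (fx k Logic.I); rewrite /= clamp01_id ?x01.
apply: compact_closedI.
  by apply: (@tychonoff nat (fun=> R) (fun k => cint (I k))) => k; exact: segment_compact.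
by apply: closed_bigI => k _; exact: closed_thread_step.
Qed.

Lemma chain_limit_connected I : interval_chain I -> connected (chain_limit I).
Proof.
move=> hI; apply: connected_of_connected_proj.
- exact: Rhausdorff.
- exact: chain_limit_compact.
- by move=> x y k [_ fx] [_ fy]; exact: thread_agree_le.
- by move=> k; rewrite chain_limit_proj //; exact: segment_connected.
Qed.

Lemma chain_limit_nondeg I k : interval_chain I -> (I k).1 < (I k).2 ->
  nondeg_continuum (chain_limit I).
Proof.
move=> hI Ik; split; first exact: chain_limit_compact.
split; first exact: chain_limit_connected.
have : cint (I k) (I k).1 /\ cint (I k) (I k).2.
  by split; rewrite /cint /= in_itv /= lexx (ltW Ik).
rewrite -chain_limit_proj // => -[[x Ix xk] [y Iy yk]].
by exists x, y; do 2!split => //; move=> xy; move: Ik; rewrite -xk -yk xy ltxx.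
Qed.

Lemma chain_limit_hdist_le I J n : interval_chain I -> interval_chain J -> I n = J n ->
  0 <= hdist (chain_limit I) (chain_limit J) <= 2^-1 ^+ n.+1.
Proof.
move=> hI hJ IJ.
have nonempty K : interval_chain K -> chain_limit K !=set0.
  move=> hK; have [[_ K12 _] _] := hK 0%N.
  have : cint (K 0%N) (K 0%N).1 by rewrite /cint /= in_itv /= lexx K12.
  by rewrite -chain_limit_proj // => -[x Kx _]; exists x.
have dprod_le K K' a b m : interval_chain K -> interval_chain K' ->
    chain_limit K a -> chain_limit K' b -> (forall k, (k < m)%N -> a k = b k) ->
    0 <= dprod a b <= 2^-1 ^+ m.
  move=> hK hK' Ka K'b; apply: dprod_le_agree => k.
  have := cint_sub01 (hK k).1 (Ka.1 k); have := cint_sub01 (hK' k).1 (K'b.1 k).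
  by rewrite ler_norml; lra.
have close K K' : interval_chain K -> interval_chain K' -> K n = K' n ->
    forall a, chain_limit K a -> exists2 b, chain_limit K' b & dprod a b <= 2^-1 ^+ n.+1.
  move=> hK hK' KK' a Ka; have : cint (K' n) (a n) by rewrite -KK'; exact: Ka.1 n.
  rewrite -chain_limit_proj // => -[b K'b bn]; exists b => //.
  have ab := thread_agree_le Ka.2 K'b.2 (esym bn).
  by have /andP[_ ->] := dprod_le _ _ _ _ n.+1 hK hK' Ka K'b ab.
apply: hdist_le; [exact: nonempty|exact: nonempty| |exact: close|exact: close].
move=> a b Ia Jb; split.
- by have /andP[] := dprod_le _ _ _ _ 0%N hI hJ Ia Jb ltac:(by case).
- by have /andP[] := dprod_le _ _ _ _ 0%N hJ hI Jb Ia ltac:(by case).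
Qed.

Lemma chain_extend p : subinterval01 p -> exists2 I, interval_chain I & I 0%N = p.
Proof.
move=> p01.
have /choice[up hup] : forall q, exists r,
    subinterval01 q -> subinterval01 r /\ f @` cint r = cint q.
  move=> q; have [/lift_interval[r r01 fr]|nq] := pselect (subinterval01 q).
    by exists r.
  by exists q => /nq.
have iter01 k : subinterval01 (iter k up p) by elim: k => // k IH; exact: (hup _ IH).1.
by exists (fun k => iter k up p) => // k; split => //; exact: (hup _ (iter01 k)).2.
Qed.

Lemma chain_splice T n S :
  interval_chain T -> subinterval01 S -> f @` cint S = cint (T n) ->
  exists2 J, interval_chain J & (forall k, (k <= n)%N -> J k = T k) /\ J n.+1 = S.
Proof.
move=> hT S01 fS; have [E hE E0] := chain_extend S01.
exists (fun k => if (k <= n)%N then T k else E (k - n.+1)%N); last first.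
  by split => [k ->|]; rewrite ?ltnn ?subnn.
move=> k /=; case: (ltngtP k n) => [kn|nk|->].
- exact: hT.
- by rewrite (subSn nk); exact: hE.
- by rewrite subnn E0; split; [exact: (hT n).1|].
Qed.

Lemma itv_not_sub_set2 (a b l r : R) : a < b -> ~ `[a, b]%classic `<=` [set l; r].
Proof.
move=> ab sub; have mem t : a <= t <= b -> t = l \/ t = r.
  by move=> abt; apply: sub; rewrite /= in_itv.
by have [] := mem a ltac:(lra); have [] := mem b ltac:(lra);
  have [] := mem ((a + b) / 2) ltac:(lra); lra.
Qed.

Lemma splitting_chain_limit T n S : interval_chain T ->
  0 <= S.1 -> S.1 < S.2 -> S.2 <= 1 ->
  cint S `&` cint (T n.+1) `<=` [set (T n.+1).1; (T n.+1).2] ->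
  f @` cint S = f @` cint (T n.+1) ->
  exists2 J, interval_chain J & [/\ forall k, (k <= n)%N -> J k = T k,
    nondeg_continuum (chain_limit J) & chain_limit J <> chain_limit T].
Proof.
move=> hT S0 S12 S1 ST fS; rewrite (hT n).2 in fS.
have [J hJ [JT JS]] := chain_splice hT (And3 S0 (ltW S12) S1) fS.
exists J => //; split => //; first by apply: (chain_limit_nondeg (k := n.+1)); rewrite ?JS.
move=> /(congr1 (image^~ (fun x => x n.+1))); rewrite !chain_limit_proj // JS => ST'.
by rewrite -ST' setIid in ST; exact: itv_not_sub_set2 S12 ST.
Qed.
End ChainLimit.

Theorem lemma4p6 (R : realType) (f : R -> R) :
  {within `[0, 1]%classic, continuous f} ->
  f @` `[0, 1]%classic = `[0, 1]%classic ->
  admits_splitting_sequence f ->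
  exists (C : set (seqR R)) (Cn : nat -> set (seqR R)),
    [/\ nondeg_continuum C, C `<=` invlim f,
        (forall n, [/\ nondeg_continuum (Cn n), Cn n `<=` invlim f & Cn n <> C])
      & hdist (Cn n) C @[n --> \oo] --> 0].
Proof.
move=> f_cont f_surj [T [[Tsub [Tim [m Tm]]] [N [S [Ninf TS]]]]].
have hT : interval_chain f T by move=> k; have [T0 [T12 [T1 _]]] := Tsub k.
have approx j : exists J, [/\ interval_chain f J, J j = T j,
    nondeg_continuum (chain_limit f J) & chain_limit f J <> chain_limit f T].
  have [[|n] [Nn /negP]] := infinite_setN0 (infinite_setD Ninf (finite_II j.+1)) => //.
  rewrite /= ltnS -ltnNge => jn; have [S0 [S12 [S1 [ST fS]]]] := TS n.+1 Nn.
  have [J hJ [JT Jnd JT']] := splitting_chain_limit f_cont f_surj hT S0 S12 S1 ST fS.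
  by exists J; split => //; exact: JT.
have /choice[J hJ] := approx.
exists (chain_limit f T), (chain_limit f \o J); split.
- exact: (chain_limit_nondeg f_cont hT (Tm m (leqnn m))).
- exact: chain_limit_sub_invlim.
- by move=> j; have [hJj _ Jnd JT] := hJ j; split => //; exact: chain_limit_sub_invlim.
- apply: (@squeeze_cvgr _ _ _ _ (cst 0) (fun j => (2 : R)^-1 ^+ j.+1)).
  + apply: nearW => j; have [hJj JTj _ _] := hJ j; exact: chain_limit_hdist_le.
  + exact: cvg_cst.
  + rewrite (cvg_shiftS (fun j => (2 : R)^-1 ^+ j)); apply: cvg_expr.
    by rewrite gtr0_norm ?invr_gt0 // invf_lt1 // ltr1n.
Qed.
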